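(* Let $I$ be a square-free monomial ideal of $S=K[x_1,\ldots,x_n]$ with minimal generating set $G(I)=\bigcup_{i=1}^kG_{d_i}$, where $G_{d_i}$ consists of the generators of degree $d_i$, and for $l\notin\{d_1,\ldots,d_k\}$ put $G_l=\emptyset$. Then $I$ is an $f$-ideal if and only if for each $l\in[n]$, $$|G_l|=\tfrac12\Big(C_n^l-\Big|\bigcup_{d_i>l}\sqcap^{d_i-l}(G_{d_i})\Big|-\Big|\bigcup_{d_i<l}\sqcup^{l-d_i}(G_{d_i})\Big|\Big).$$
   Context: $K$ is a field; $C_n^l$ is the binomial coefficient. For a set $A$ of square-free monomials, $\sqcup(A)=\{gx_i\mid g\in A,\ x_i\nmid g\}$ and $\sqcap(A)=\{h\ne1\mid h=g/x_i \text{ for some } g\in A,\ x_i\mid g\}$; $\sqcup^m,\sqcap^m$ are $m$-fold iterates. With $\sigma$ the bijection $x_{i_1}\cdots x_{i_k}\mapsto\{i_1,\ldots,i_k\}$, the facet complex $\delta_{\mathcal{F}}(I)$ has facets $\sigma(g)$, $g\in G(I)$, the Stanley–Reisner complex is $\delta_{\mathcal{N}}(I)=\{\sigma(g)\mid g\text{ square-free monomial},\ g\notin I\}$, and $I$ is an $f$-ideal if both complexes have the same $f$-vector. *)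

(* Square-free monomials of K[x_1..x_n] are identified, via the
   bijection sigma, with subsets of 'I_n (variable x_{i+1} <-> index i).
   A square-free monomial ideal I is identified with the set of square-free
   monomials it contains, which is an up-closed family of subsets
   (it determines I, since I is generated by square-free monomials). *)
From mathcomp Require Import all_boot all_order all_algebra.
Set Implicit Arguments. Unset Strict Implicit. Unset Printing Implicit Defensive.

Section SqFree.
Variable n : nat.
Notation mono := {set 'I_n}.

Definition sqfree_ideal (I : {set mono}) : Prop :=
  forall A B : mono, A \in I -> A \subset B -> B \in I.

Definition mingens (I : {set mono}) : {set mono} :=
  [set A in I | [forall B in I, (B \subset A) ==> (B == A)]].

Definition Gdeg (G : {set mono}) (l : nat) : {set mono} :=
  [set g in G | #|g| == l].

Definition sqcup (A : {set mono}) : {set mono} :=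
  [set B : mono | [exists g in A, exists i : 'I_n, (i \notin g) && (B == i |: g)]].

Definition sqcap (A : {set mono}) : {set mono} :=
  [set h : mono | (h != set0) &&
     [exists g in A, exists i : 'I_n, (i \in g) && (h == g :\ i)]].

Definition facet_complex (I : {set mono}) : {set mono} :=
  [set F : mono | [exists g in mingens I, F \subset g]].

Definition SR_complex (I : {set mono}) : {set mono} :=
  [set F : mono | F \notin I].

(* number of faces with l vertices (= f_{l-1}) *)
Definition fnum (C : {set mono}) (l : nat) : nat := #|[set F in C | #|F| == l]|.

(* f-ideal: equal f-vectors (f_0, ..., f_{n-1}), i.e. face counts of sizes 1..n *)
Definition f_ideal (I : {set mono}) : Prop :=
  forall l, 1 <= l <= n -> fnum (facet_complex I) l = fnum (SR_complex I) l.

End SqFree.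

From mathcomp Require Import all_boot all_order all_algebra.
From mathcomp Require Import zify.
Set Implicit Arguments. Unset Strict Implicit. Unset Printing Implicit Defensive.

(* Iterating sqcup (resp. sqcap) k times on a family of d-sets produces exactly
   the (d+k)-sets containing (resp. (d-k)-sets contained in) one of its members.
   Hence the l-faces of the facet complex are the generators of degree l together
   with the l-sets properly below a generator, while the l-sets lying in I are the
   generators of degree l together with the l-sets properly above a generator; the
   second family is the complement of the l-faces of the Stanley-Reisner complex
   among all C(n, l) l-sets. Minimality of the generators makes both unions
   disjoint, and equating the two face counts gives the formula for |G_l|. *)

Section IteratedShadows.
Variable n : nat.
Implicit Types (B C g : {set 'I_n}) (X G : {set {set 'I_n}}).

Definition uniform X d := {in X, forall g, #|g| = d}.

Lemma uniform_Gdeg G d : uniform (Gdeg G d) d.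
Proof. by move=> g; rewrite inE => /andP[_ /eqP]. Qed.

Lemma ltn_card_ord_set B : #|B| < n.+1.
Proof. by rewrite ltnS -[n in _ <= n]card_ord max_card. Qed.

Lemma mem_uniform_sup X d B : uniform X d ->
  (B \in X) = (#|B| == d) && [exists g in X, g \subset B].
Proof.
move=> hX; apply/idP/andP => [BX | [/eqP hB /exists_inP[g gX gB]]].
  by rewrite (hX B BX) eqxx; split=> //; apply/exists_inP; exists B.
suff /eqP <- : g == B by [].
by rewrite eqEcard gB hB (hX g gX) leqnn.
Qed.

Lemma mem_uniform_sub X d B : uniform X d ->
  (B \in X) = (#|B| == d) && [exists g in X, B \subset g].
Proof.
move=> hX; apply/idP/andP => [BX | [/eqP hB /exists_inP[g gX Bg]]].
  by rewrite (hX B BX) eqxx; split=> //; apply/exists_inP; exists B.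
suff /eqP -> : B == g by [].
by rewrite eqEcard Bg hB (hX g gX) leqnn.
Qed.

Lemma mem_iter_sqcup X d k B : uniform X d ->
  (B \in iter k (@sqcup n) X) = (#|B| == d + k) && [exists g in X, g \subset B].
Proof.
move=> hX; elim: k B => [|k IH] B; first by rewrite addn0 (mem_uniform_sup _ hX).
rewrite /= inE; apply/existsP/andP.
  case=> C /andP[+ /existsP[i /andP[iC /eqP ->]]].
  rewrite IH => /andP[/eqP hC /exists_inP[g gX gC]].
  split; first by rewrite cardsU1 iC hC addnS.
  by apply/exists_inP; exists g; rewrite // (subset_trans gC) ?subsetUr.
case=> /eqP hB /exists_inP[g gX gB].
have /properP[_ [i iB ig]] : g \proper B.
  by rewrite properEcard gB hB (hX g gX) addnS ltnS leq_addr.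
exists (B :\ i); rewrite IH -andbA; apply/and3P; split.
- by apply/eqP; move: (cardsD1 i B); rewrite iB hB; lia.
- by apply/exists_inP; exists g; rewrite // subsetD1 gB.
- by apply/existsP; exists i; rewrite setD11 setD1K ?eqxx.
Qed.

(* [k < d] is needed because sqcap discards the empty monomial. *)
Lemma mem_iter_sqcap X d k B : uniform X d -> k < d ->
  (B \in iter k (@sqcap n) X) = (#|B| + k == d) && [exists g in X, B \subset g].
Proof.
move=> hX; elim: k B => [|k IH] B lt_kd; first by rewrite addn0 (mem_uniform_sub _ hX).
rewrite /= inE; apply/andP/andP.
  case=> _ /existsP[C /andP[+ /existsP[i /andP[iC /eqP BE]]]].
  rewrite (IH _ (ltnW lt_kd)) BE => /andP[/eqP hC /exists_inP[g gX Cg]].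
  split; first by move: (cardsD1 i C); rewrite iC -hC addnS => ->.
  by apply/exists_inP; exists g; rewrite // (subset_trans _ Cg) ?subsetDl.
case=> /eqP hB /exists_inP[g gX Bg].
split; first by apply: contraTneq lt_kd => B0; rewrite -hB B0 cards0 ltnn.
have /properP[_ [i ig iB]] : B \proper g.
  by rewrite properEcard Bg (hX g gX) -hB addnS ltnS leq_addr.
apply/existsP; exists (i |: B); rewrite (IH _ (ltnW lt_kd)) -andbA; apply/and3P; split.
- by rewrite cardsU1 iB add1n addSnnS hB.
- by apply/exists_inP; exists g; rewrite // subUset sub1set ig.
- by apply/existsP; exists i; rewrite setU11 setU1K ?eqxx.
Qed.

Lemma mem_bigcup_iter_sqcap G l B : 0 < l ->
  (B \in \bigcup_(d < n.+1 | l < d) iter (d - l) (@sqcap n) (Gdeg G d))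
  = (#|B| == l) && [exists g in G, B \proper g].
Proof.
move=> l_gt0; have sub_lt d : l < d -> d - l < d by lia.
apply/bigcupP/andP => [[d /= /[dup] lt_ld /sub_lt lt_d] | [/eqP hB /exists_inP[g gG]]].
  rewrite (mem_iter_sqcap _ (@uniform_Gdeg G _) lt_d).
  case/andP=> /eqP hB /exists_inP[g]; rewrite inE => /andP[gG /eqP gd] Bg.
  have {}hB : #|B| = l by lia.
  by split; [rewrite hB | apply/exists_inP; exists g; rewrite // properEcard Bg gd hB].
rewrite properEcard => /andP[Bg lt_Bg]; subst l.
exists (Ordinal (ltn_card_ord_set g)) => //=.
rewrite (mem_iter_sqcap _ (@uniform_Gdeg G _) (sub_lt _ lt_Bg)) subnKC ?eqxx ?(ltnW lt_Bg) //=.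
by apply/exists_inP; exists g; rewrite // inE gG /=.
Qed.

Lemma mem_bigcup_iter_sqcup G l B :
  (B \in \bigcup_(d < n.+1 | d < l) iter (l - d) (@sqcup n) (Gdeg G d))
  = (#|B| == l) && [exists g in G, g \proper B].
Proof.
apply/bigcupP/andP => [[d /= lt_dl] | [/eqP hB /exists_inP[g gG]]].
  rewrite (mem_iter_sqcup _ _ (@uniform_Gdeg G _)) subnKC; last exact: ltnW.
  case/andP=> /eqP hB /exists_inP[g]; rewrite inE => /andP[gG /eqP gd] gB.
  by split; [rewrite hB | apply/exists_inP; exists g; rewrite // properEcard gB gd hB].
rewrite properEcard => /andP[gB lt_gB]; subst l.
exists (Ordinal (ltn_card_ord_set g)) => //=.
rewrite (mem_iter_sqcup _ _ (@uniform_Gdeg G _)) subnKC ?eqxx ?(ltnW lt_gB) //=.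
by apply/exists_inP; exists g; rewrite // inE gG /=.
Qed.

End IteratedShadows.

Section FaceCounts.
Variables (n : nat) (I : {set {set 'I_n}}).
Implicit Types (B g h : {set 'I_n}).

Lemma mingensP g :
  reflect (g \in I /\ {in I, forall B, B \subset g -> B = g}) (g \in mingens I).
Proof.
rewrite inE; apply: (iffP andP) => [[gI /forall_inP min_g] | [gI min_g]].
  by split=> // B BI Bg; apply/eqP; apply: (implyP (min_g B BI)).
by split=> //; apply/forall_inP => B BI; apply/implyP => /min_g ->.
Qed.

Lemma mingens_sub : {subset mingens I <= I}.
Proof. by move=> g /mingensP[]. Qed.

Lemma mingens_notproper g h : g \in I -> h \in mingens I -> ~~ (g \proper h).
Proof. by move=> gI /mingensP[_ min_h]; apply/negP => /andP[/(min_h _ gI) -> /negP]. Qed.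

Lemma mingens_below B : B \in I -> exists2 g, g \in mingens I & g \subset B.
Proof.
move=> BI; have [g /minsetP[gI min_g] gB] := minset_exists BI.
by exists g => //; apply/mingensP; split=> // C CI Cg; apply: min_g.
Qed.

Lemma fnum_facet_complex l : 0 < l ->
  fnum (facet_complex I) l = #|Gdeg (mingens I) l|
    + #|\bigcup_(d < n.+1 | l < d) iter (d - l) (@sqcap n) (Gdeg (mingens I) d)|.
Proof.
move=> l_gt0; rewrite /fnum -cardsUI.
set U := \bigcup_(d < n.+1 | l < d) _.
have -> : [set F in facet_complex I | #|F| == l] = Gdeg (mingens I) l :|: U.
  apply/setP => B; rewrite in_setU mem_bigcup_iter_sqcap //.
  rewrite [B \in Gdeg _ _]inE [B \in [set _ in _ | _]]inE [B \in facet_complex _]inE.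
  case: (#|B| == l); rewrite ?andbT ?andbF //=.
  apply/exists_inP/orP => [[g gG] | [BG | /exists_inP[g gG /proper_sub Bg]]].
  - by rewrite subEproper => /orP[/eqP-> | Bg]; [left | right; apply/exists_inP; exists g].
  - by exists B.
  - by exists g.
suff -> : Gdeg (mingens I) l :&: U = set0 by rewrite cards0 addn0.
apply/setP => B; rewrite in_setI mem_bigcup_iter_sqcap // [B \in Gdeg _ _]inE in_set0.
apply/negP => /andP[/andP[/mingens_sub BI _] /andP[_ /exists_inP[g gG]]].
exact/negP/mingens_notproper.
Qed.

Lemma card_ideal_faces l : sqfree_ideal I ->
  #|[set B in I | #|B| == l]| = #|Gdeg (mingens I) l|
    + #|\bigcup_(d < n.+1 | d < l) iter (l - d) (@sqcup n) (Gdeg (mingens I) d)|.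
Proof.
move=> hI; rewrite -cardsUI.
set U := \bigcup_(d < n.+1 | d < l) _.
have -> : [set B in I | #|B| == l] = Gdeg (mingens I) l :|: U.
  apply/setP => B; rewrite in_setU mem_bigcup_iter_sqcup.
  rewrite [B \in Gdeg _ _]inE [B \in [set _ in _ | _]]inE.
  case: (#|B| == l); rewrite ?andbT ?andbF //=.
  apply/idP/orP => [BI | [/mingens_sub // | /exists_inP[g /mingens_sub gI /proper_sub gB]]].
    have [g gG] := mingens_below BI.
    by rewrite subEproper => /orP[/eqP<- | gB]; [left | right; apply/exists_inP; exists g].
  exact: hI gI gB.
suff -> : Gdeg (mingens I) l :&: U = set0 by rewrite cards0 addn0.
apply/setP => B; rewrite in_setI mem_bigcup_iter_sqcup [B \in Gdeg _ _]inE in_set0.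
apply/negP => /andP[/andP[BG _] /andP[_ /exists_inP[g /mingens_sub gI]]].
exact/negP/mingens_notproper.
Qed.

Lemma fnum_SR_complex l :
  fnum (SR_complex I) l + #|[set B in I | #|B| == l]| = 'C(n, l).
Proof.
rewrite -[n in 'C(n, l)]card_ord -card_draws.
rewrite -(cardsID I [set B : {set 'I_n} | #|B| == l]) addnC.
by congr (_ + _); apply: eq_card => B; rewrite !inE andbC.
Qed.

End FaceCounts.

Theorem theorem6p3 (n : nat) (I : {set {set 'I_n}}) :
  sqfree_ideal I ->
  (f_ideal I <->
   forall l : nat, 1 <= l <= n ->
     ((#|Gdeg (mingens I) l|%:Z * 2)%R =
      'C(n, l)%:Z
      - #|\bigcup_(d < n.+1 | (l < d)%N) iter (d - l) (@sqcap n) (Gdeg (mingens I) d)|%:Z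
      - #|\bigcup_(d < n.+1 | (d < l)%N) iter (l - d) (@sqcup n) (Gdeg (mingens I) d)|%:Z)%R).
Proof.
move=> hI; rewrite /f_ideal; split=> h l hl; move: (h l hl); case/andP: hl => l_gt0 _.
all: move: (fnum_facet_complex I l_gt0) (fnum_SR_complex I l) (card_ideal_faces l hI); lia.
Qed.
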